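(* Let $\mathcal{T}_j=(T_{j,t})_{t\ge0}$, $j=1,\dots,n$, be commuting contractive semigroups on a Hilbert space $\mathcal{K}$ with cogenerators $T_1,\dots,T_n$, and let $\mathcal{H}$ be a closed subspace of $\mathcal{K}$. Then $\overline{\operatorname{span}}\{T_{1,t_1}T_{2,t_2}\cdots T_{n,t_n}h:h\in\mathcal{H},\ t_1,\dots,t_n\in\mathbb{R}_+\}=\mathcal{K}$ if and only if $\overline{\operatorname{span}}\{T_1^{m_1}T_2^{m_2}\cdots T_n^{m_n}h:h\in\mathcal{H},\ m_1,\dots,m_n\in\mathbb{Z}_+\}=\mathcal{K}$.
   Context: A contractive semigroup is a strongly continuous one-parameter semigroup $(T_t)_{t\ge0}$ of contractions with $T_0=I$; its cogenerator is $T=(A+I)(A-I)^{-1}$, where $A$ is the generator. Semigroups commute if $T_{i,t}T_{j,t}=T_{j,t}T_{i,t}$ for all $t\ge0$ (equivalently, their cogenerators commute). *)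

From HB Require Import structures.
From mathcomp Require Import all_boot all_order all_algebra.
From mathcomp Require Import all_classical all_reals all_analysis.
From mathcomp Require Import complex.
Import Order.TTheory GRing.Theory Num.Theory.
Import numFieldNormedType.Exports.

Set Implicit Arguments.
Unset Strict Implicit.
Unset Printing Implicit Defensive.

Local Open Scope classical_set_scope.
Local Open Scope ring_scope.

Section Defs.
Variable R : realType.
Variable V : completeNormedModType R[i].

(* [ip] is an inner product on V inducing its norm: together with the
   completeness of V this says V is a complex Hilbert space. *)
Definition is_inner_product_of_norm (ip : V -> V -> R[i]) : Prop :=
  [/\ (forall (a : R[i]) (x y z : V), ip (a *: x + y) z = a * ip x z + ip y z),
      (forall x y : V, ip x y = Num.conj (ip y x)) &
      (forall x : V, `|x| ^+ 2 = ip x x)].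

(* (S t)_{t >= 0} is a strongly continuous semigroup of (linear) contractions
   with S 0 = I.  Only the values at t >= 0 are relevant. *)
Definition contractive_semigroup (S : R -> V -> V) : Prop :=
  [/\ (forall t : R, 0 <= t ->
         forall (a : R[i]) (x y : V), S t (a *: x + y) = a *: S t x + S t y),
      (forall x : V, S 0 x = x),
      (forall s t : R, 0 <= s -> 0 <= t -> forall x : V, S (s + t) x = S s (S t x)),
      (forall t : R, 0 <= t -> forall x : V, `|S t x| <= `|x|) &
      (forall x : V, (fun t : R => S t x) @ 0^'+ --> x)].

(* The generator A of S, as its graph: x \in D(A) and A x = z. *)
Definition generator_graph (S : R -> V -> V) (x z : V) : Prop :=
  (fun t : R => (real_complex R (t^-1)) *: (S t x - x)) @ 0^'+ --> z.

(* T is the cogenerator (A + I)(A - I)^{-1} of S: for every y, with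
   x = (A - I)^{-1} y (x \in D(A), A x - x = y), T y = A x + x. *)
Definition cogenerator (S : R -> V -> V) (T : V -> V) : Prop :=
  forall y : V, exists x z : V,
    [/\ generator_graph S x z, z - x = y & T y = z + x].

Definition commuting_semigroups (n : nat) (S : 'I_n -> R -> V -> V) : Prop :=
  forall (i j : 'I_n) (t : R), 0 <= t -> forall x : V,
    S i t (S j t x) = S j t (S i t x).

Definition closed_subspace (H : set V) : Prop :=
  [/\ closed H, H 0 &
      forall (a : R[i]) (x y : V), H x -> H y -> H (a *: x + y)].

Definition span (A : set V) : set V :=
  [set v | exists (m : nat) (c : 'I_m -> R[i]) (f : 'I_m -> V),
      (forall k, A (f k)) /\ v = \sum_(k < m) c k *: f k].

Definition closed_span (A : set V) : set V := closure (span A).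

Definition compose_all (n : nat) (F : 'I_n -> V -> V) (h : V) : V :=
  foldr (fun j v => F j v) h (enum 'I_n).

Definition semigroup_orbit (n : nat) (S : 'I_n -> R -> V -> V) (H : set V)
  : set V :=
  [set v | exists (h : V) (t : 'I_n -> R),
      [/\ H h, (forall j, 0 <= t j) & v = compose_all (fun j => S j (t j)) h]].

Definition cogenerator_orbit (n : nat) (T : 'I_n -> V -> V) (H : set V)
  : set V :=
  [set v | exists (h : V) (m : 'I_n -> nat),
      H h /\ v = compose_all (fun j => iter (m j) (T j)) h].

End Defs.

From Pilot Require Import Defs.
From HB Require Import structures.
From mathcomp Require Import all_boot all_order all_algebra.
From mathcomp Require Import all_classical all_reals all_analysis.
From mathcomp Require Import complex.
From mathcomp Require Import ring lra.
Import Order.TTheory GRing.Theory Num.Theory.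
Import numFieldNormedType.Exports.

Set Implicit Arguments.
Unset Strict Implicit.
Unset Printing Implicit Defensive.

Local Open Scope classical_set_scope.
Local Open Scope ring_scope.
Local Open Scope complex_scope.

(* A closed subspace K is invariant under a contraction semigroup (S t) iff it
   is invariant under its cogenerator T = 1 - 2 (1 - A)^-1.  If K is
   S-invariant, it contains every resolvent (mu - A)^-1 y, y in K, as a limit of
   Riemann sums of the Laplace transform of S, hence it is T-invariant.
   Conversely, T-invariance puts (1 - A)^-1 y in K; a contraction argument
   propagates this to every (mu - A)^-1, and the backward Euler scheme
   S t v = lim (1 - t/N A)^-N v then yields S-invariance.  By induction on the
   number of semigroups, innermost first, the closed span of each nested orbit
   of H is a closed subspace invariant under the operators of the other orbit,
   so the two closed spans coincide. *)

Section RealNorm.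
Variable R : realType.
Variable V : completeNormedModType R[i].

(* The norm of a normed space over [R[i]] is complex-valued (with zero
   imaginary part); [rnorm] is its real-valued version. *)
Definition rnorm (x : V) : R := complex.Re `|x|.

Lemma rnormE x : `|x| = (rnorm x)%:C.
Proof. by rewrite /rnorm RRe_real // ger0_real. Qed.

Lemma rnorm_ge0 x : 0 <= rnorm x.
Proof. by rewrite -ler0c -rnormE. Qed.

Lemma rnormD x y : rnorm (x + y) <= rnorm x + rnorm y.
Proof. by rewrite -lecR rmorphD /= -!rnormE ler_normD. Qed.

Lemma rnormN x : rnorm (- x) = rnorm x.
Proof. by rewrite /rnorm normrN. Qed.

Lemma rnorm_distC x y : rnorm (x - y) = rnorm (y - x).
Proof. by rewrite /rnorm distrC. Qed.

Lemma rnorm0 : rnorm 0 = 0.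
Proof. by rewrite /rnorm normr0. Qed.

Lemma rnorm_le0 x : rnorm x <= 0 -> x = 0.
Proof.
move=> h; apply/normr0_eq0; rewrite rnormE.
by have -> : rnorm x = 0 by apply/eqP; rewrite eq_le h rnorm_ge0.
Qed.

Lemma Re_norm_ge0 (a : R[i]) : 0 <= complex.Re `|a|.
Proof. by have := normr_ge0 a; rewrite lecE => /andP[]. Qed.

Lemma rnormZ (a : R[i]) x : rnorm (a *: x) = complex.Re `|a| * rnorm x.
Proof. by apply: complexI; rewrite -rnormE normrZ rnormE rmorphM. Qed.

Lemma rnormZ_real (t : R) x : rnorm (t%:C *: x) = `|t| * rnorm x.
Proof.
rewrite rnormZ; congr (_ * _).
by rewrite normc_def /= expr0n addr0 sqrtr_sqr.
Qed.

Lemma rnormZ_ge0 (t : R) x : 0 <= t -> rnorm (t%:C *: x) = t * rnorm x.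
Proof. by move=> t0; rewrite rnormZ_real ger0_norm. Qed.

Lemma rnorm_sum_le N (c : nat -> R) (v : nat -> V) (B : nat -> R) :
  (forall k, 0 <= c k) -> (forall k, rnorm (v k) <= B k) ->
  rnorm (\sum_(k < N) (c k)%:C *: v k) <= \sum_(k < N) c k * B k.
Proof.
move=> c0 hB; elim: N => [|N ih]; first by rewrite !big_ord0 rnorm0.
rewrite !big_ord_recr /=; apply: le_trans (rnormD _ _) _; apply: lerD => //.
by rewrite rnormZ_ge0 // ler_wpM2l.
Qed.

Lemma closure_rnormP (A : set V) x : closure A x <->
  (forall e : R, 0 < e -> exists y, A y /\ rnorm (x - y) <= e).
Proof.
split=> [Ax e e0|h B /nbhs_ballP [e /= e0 sB]].
  have /Ax [y [Ay bxy]] : nbhs x (ball x e%:C) by apply: nbhsx_ballx; rewrite ltcR.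
  by exists y; split => //; move: bxy; rewrite -ball_normE /= rnormE ltcR => /ltW.
have e0' : 0 < complex.Re e by move: e0; rewrite ltcE => /andP[_].
have [y [Ay hy]] := h (complex.Re e / 2) (divr_gt0 e0' (ltr0Sn _ 1)).
exists y; split => //; apply: sB; rewrite -ball_normE /= rnormE.
rewrite -(RRe_real (gtr0_real e0)) ltcR; apply: (le_lt_trans hy); lra.
Qed.

End RealNorm.

Lemma pos_complexE (R : realType) (e : R[i]) :
  0 < e -> 0 < complex.Re e /\ e = (complex.Re e)%:C.
Proof.
move=> e0; split; first by move: e0; rewrite ltcE => /andP[_].
by rewrite RRe_real // gtr0_real.
Qed.

Lemma near_0plusP (R : realType) (P : R -> Prop) : (\forall t \near 0^'+, P t) <->
  exists2 d : R, 0 < d & forall t, 0 < t -> t < d -> P t.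
Proof.
split=> [/nbhs_ballP [d /= d0 hd]|[d d0 hd]].
  exists d => // t t0 td; apply: hd => //.
  by rewrite /ball /= sub0r normrN gtr0_norm.
apply/nbhs_ballP; exists d => //= t.
by rewrite /ball /= sub0r normrN => htd t0; apply: hd; rewrite // -(gtr0_norm t0).
Qed.

Section LinearMap.
Variable R : realType.
Variable V : completeNormedModType R[i].

Definition linear_map (f : V -> V) := forall a x y, f (a *: x + y) = a *: f x + f y.

Variable f : V -> V.
Hypothesis lin_f : linear_map f.

Lemma linear_map0 : f 0 = 0.
Proof.
have := lin_f 1 0 0; rewrite !scale1r !addr0 => h.
by apply: (@addrI _ (f 0)); rewrite addr0 -h.
Qed.

Lemma linear_mapD x y : f (x + y) = f x + f y.
Proof. by have := lin_f 1 x y; rewrite !scale1r. Qed.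

Lemma linear_mapZ a x : f (a *: x) = a *: f x.
Proof. by have := lin_f a x 0; rewrite !addr0 linear_map0 addr0. Qed.

Lemma linear_mapB x y : f (x - y) = f x - f y.
Proof. by rewrite linear_mapD -scaleN1r linear_mapZ scaleN1r. Qed.

End LinearMap.

Section Semigroup.
Variable R : realType.
Variable V : completeNormedModType R[i].
Variable S : R -> V -> V.
Hypothesis hS : contractive_semigroup S.

Lemma sgp_linear t : 0 <= t -> linear_map (S t).
Proof. by case: hS => h _ _ _ _ t0; apply: h. Qed.

Lemma sgp_at0 x : S 0 x = x.
Proof. by case: hS => _ h _ _ _; apply: h. Qed.

Lemma sgp_add s t x : 0 <= s -> 0 <= t -> S (s + t) x = S s (S t x).
Proof. by case: hS => _ _ h _ _ s0 t0; apply: h. Qed.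

Lemma sgp_contr t x : 0 <= t -> rnorm (S t x) <= rnorm x.
Proof. by case: hS => _ _ _ h _ t0; rewrite -lecR -!rnormE; apply: h. Qed.

Lemma sgp_cont0 x (e : R) : 0 < e ->
  exists2 d : R, 0 < d & forall r, 0 <= r -> r < d -> rnorm (S r x - x) <= e.
Proof.
move=> e0; case: hS => _ _ _ _ /(_ x) /cvgrPdist_le /(_ e%:C).
rewrite ltcR => /(_ e0) /near_0plusP [d d0 hd]; exists d => // r.
rewrite le_eqVlt => /orP[/eqP <- _|r0 rd]; first by rewrite sgp_at0 subrr rnorm0 ltW.
by rewrite -lecR -rnormE distrC; apply: hd.
Qed.

Definition diffq (h : R) (x : V) := (h^-1)%:C *: (S h x - x).

Lemma diffq_linear h a x y : 0 < h -> diffq h (a *: x + y) = a *: diffq h x + diffq h y.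
Proof.
move=> h0; rewrite /diffq (sgp_linear (ltW h0)) scalerA mulrC -scalerA -scalerDr.
by congr (_ *: _); rewrite scalerBr opprD addrACA.
Qed.

Lemma sgp_diffq h x : 0 < h -> S h x = x + h%:C *: diffq h x.
Proof.
move=> h0; rewrite /diffq scalerA -rmorphM mulfV ?gt_eqF // rmorph1 scale1r.
by rewrite addrC subrK.
Qed.

Local Notation gen := (generator_graph S).

Lemma generator_graphP x z : gen x z <-> forall e : R, 0 < e ->
  exists2 d : R, 0 < d & forall h, 0 < h -> h < d -> rnorm (diffq h x - z) <= e.
Proof.
split=> [g e e0|hg].
  move/cvgrPdist_le: g => /(_ e%:C); rewrite ltcR => /(_ e0) /near_0plusP.
  by move=> [d d0 hd]; exists d => // h h0 hd'; rewrite -lecR -rnormE distrC; apply: hd.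
apply/cvgrPdist_le => e /pos_complexE [e0 ->].
have [d d0 hd] := hg _ e0; apply/near_0plusP; exists d => // h h0 hd'.
by rewrite distrC rnormE lecR; apply: hd.
Qed.

Lemma generator_graph_linear a x1 z1 x2 z2 : gen x1 z1 -> gen x2 z2 ->
  gen (a *: x1 + x2) (a *: z1 + z2).
Proof.
move=> g1 g2; apply: cvg_trans (cvgD (cvgZ (cvg_cst a) g1) g2).
apply: near_eq_cvg; near=> h => /=.
by rewrite -[_ *: (_ - _)]/(diffq h _) diffq_linear.
Unshelve. all: by end_near. Qed.

Lemma generator_graphZ a x z : gen x z -> gen (a *: x) (a *: z).
Proof.
move=> g; have g0 : gen 0 0.
  apply/generator_graphP => e e0; exists 1 => // h h0 _.
  by rewrite /diffq (linear_map0 (sgp_linear (ltW h0))) subrr scaler0 subrr rnorm0 ltW.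
by have := generator_graph_linear (a := a) g g0; rewrite !addr0.
Qed.

Lemma generator_graphB x1 z1 x2 z2 : gen x1 z1 -> gen x2 z2 -> gen (x1 - x2) (z1 - z2).
Proof.
move=> g1 g2; have := generator_graph_linear (a := -1) g2 g1.
by rewrite !scaleN1r [- x2 + _]addrC [- z2 + _]addrC.
Qed.

Lemma diffq_sgp h s x : 0 < h -> 0 <= s -> diffq h (S s x) = S s (diffq h x).
Proof.
move=> h0 s0; rewrite /diffq (linear_mapZ (sgp_linear s0)) (linear_mapB (sgp_linear s0)).
by rewrite -(sgp_add _ (ltW h0) s0) -(sgp_add _ s0 (ltW h0)) [h + s]addrC.
Qed.

Lemma generator_graph_sgp s x z : 0 <= s -> gen x z -> gen (S s x) (S s z).
Proof.
move=> s0 /generator_graphP g; apply/generator_graphP => e e0.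
have [d d0 hd] := g e e0; exists d => // h h0 hd'.
rewrite diffq_sgp // -(linear_mapB (sgp_linear s0)).
exact: le_trans (sgp_contr _ s0) (hd h h0 hd').
Qed.

(* Dissipativity of the generator: [mu |x| <= |(mu - A) x|], read off from
   [(1 + h mu) x = S h x + h (mu x - A x) - h (diffq h x - A x)]. *)
Lemma generator_dissipative x z (mu : R) : gen x z -> 0 < mu ->
  mu * rnorm x <= rnorm (mu%:C *: x - z).
Proof.
move=> /generator_graphP g mu0; apply/ler_addgt0Pr => e e0.
have [d d0 hd] := g e e0; pose h := d / 2.
have h0 : 0 < h by rewrite /h; lra.
have hd' : h < d by rewrite /h; lra.
have key : (1 + h * mu)%:C *: x =
    S h x + h%:C *: (mu%:C *: x - z) - h%:C *: (diffq h x - z).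
  rewrite sgp_diffq // rmorphD rmorph1 scalerDl scale1r rmorphM -scalerA.
  rewrite !scalerBr opprB -!addrA addKr [h%:C *: diffq h x + _]addrCA.
  by rewrite subrr addr0.
have : (1 + h * mu) * rnorm x <= rnorm x + h * rnorm (mu%:C *: x - z) + h * e.
  have hmu0 : 0 <= 1 + h * mu by apply: addr_ge0 => //; apply: mulr_ge0; lra.
  rewrite -{1}(ger0_norm hmu0) -rnormZ_real key.
  apply: le_trans (rnormD _ _) _; rewrite rnormN.
  apply: lerD; first apply: le_trans (rnormD _ _) _.
    by rewrite rnormZ_ge0 ?(ltW h0) // lerD // sgp_contr // ltW.
  by rewrite rnormZ_ge0 ?(ltW h0) // ler_wpM2l ?(ltW h0) // hd.
have := rnorm_ge0 x; move: (rnorm x) (rnorm (mu%:C *: x - z)) => a N a0 H.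
nra.
Qed.

(* [x = (mu - A)^-1 y]: [x] is in the domain of [A] and [A x = mu x - y]. *)
Definition resolvent (mu : R) (y x : V) := gen x (mu%:C *: x - y).

Lemma resolvent_linear mu a y1 x1 y2 x2 : resolvent mu y1 x1 -> resolvent mu y2 x2 ->
  resolvent mu (a *: y1 + y2) (a *: x1 + x2).
Proof.
move=> r1 r2; have := generator_graph_linear (a := a) r1 r2; rewrite /resolvent.
by congr gen; rewrite !scalerBr scalerDr !scalerA mulrC opprD addrACA -addrA.
Qed.

Lemma resolventB mu y1 x1 y2 x2 : resolvent mu y1 x1 -> resolvent mu y2 x2 ->
  resolvent mu (y1 - y2) (x1 - x2).
Proof.
move=> r1 r2; have := resolvent_linear (a := -1) r2 r1.
by rewrite !scaleN1r [- x2 + _]addrC [- y2 + _]addrC.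
Qed.

Lemma resolvent_bound mu y x : 0 < mu -> resolvent mu y x -> mu * rnorm x <= rnorm y.
Proof.
by move=> mu0 r; have := generator_dissipative r mu0; rewrite opprB addrC subrK.
Qed.

Lemma resolvent_unique mu y x x' : 0 < mu -> resolvent mu y x -> resolvent mu y x' -> x = x'.
Proof.
move=> mu0 r r'; have := resolvent_bound mu0 (resolventB r r').
rewrite subrr rnorm0 pmulr_rle0 // => /rnorm_le0 /eqP.
by rewrite subr_eq0 => /eqP.
Qed.

Lemma resolvent_sgp mu y x s : 0 <= s -> resolvent mu y x -> resolvent mu (S s y) (S s x).
Proof.
move=> s0 r; have := generator_graph_sgp s0 r.
by rewrite /resolvent (linear_mapB (sgp_linear s0)) (linear_mapZ (sgp_linear s0)).
Qed.

End Semigroup.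

Section Geometric.
Variable R : realType.

Lemma sum_geometric_weights (a c : R) N : a * c = 1 - a ->
  \sum_(k < N) a ^+ k.+1 * c = 1 - a ^+ N.
Proof.
move=> ac; elim: N => [|N ih]; first by rewrite big_ord0 expr0 subrr.
by rewrite big_ord_recr /= ih exprSr -mulrA ac; ring.
Qed.

Lemma sum_index_geometric_le (a : R) N : 0 <= a < 1 ->
  \sum_(k < N) k%:R * a ^+ k * (1 - a) <= a / (1 - a).
Proof.
move=> /andP[a0 a1]; have a1' : 1 - a != 0 by rewrite subr_eq0 gt_eqF.
have -> : \sum_(k < N) k%:R * a ^+ k * (1 - a) = (a - a ^+ N.+1) / (1 - a) - N%:R * a ^+ N.
  elim: N => [|N ih]; first by rewrite big_ord0 expr1 subrr mul0r mul0r subr0.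
  by rewrite big_ord_recr /= ih !exprS -natr1; field.
have : 0 <= N%:R * a ^+ N by rewrite mulr_ge0 ?exprn_ge0.
suff : (a - a ^+ N.+1) / (1 - a) <= a / (1 - a) by lra.
by rewrite ler_pM2r ?invr_gt0 ?subr_gt0 // gerBl exprn_ge0.
Qed.

Lemma exprn_eventually_le (q : R) : 0 <= q < 1 -> forall e : R, 0 < e ->
  exists N, forall n, (N <= n)%N -> q ^+ n <= e.
Proof.
move=> /andP[q0 q1] e e0.
have : `|q| < 1 by rewrite ger0_norm.
move/cvg_expr/cvgrPdist_le => /(_ e e0) [N _ hN]; exists N => n hn.
by have := hN n hn; rewrite /= sub0r normrN ger0_norm // exprn_ge0.
Qed.

End Geometric.

Section FixedPoint.
Variable R : realType.
Variable V : completeNormedModType R[i].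

Definition converges (u : nat -> V) (l : V) :=
  forall e : R, 0 < e -> exists N, forall n, (N <= n)%N -> rnorm (u n - l) <= e.

Lemma cauchy_converges (u : nat -> V) :
  (forall e : R, 0 < e -> exists N, forall m n, (N <= n)%N -> (n <= m)%N ->
     rnorm (u m - u n) <= e) -> exists l, converges u l.
Proof.
move=> hc; have cu : cvg (u @ \oo).
  apply/cauchy_cvgP/cauchy_ballP => e /pos_complexE [e0 ee].
  have [N hN] := hc (complex.Re e / 2) (ltac:(lra)).
  near_simpl; exists ([set n | (N <= n)%N], [set n | (N <= n)%N]).
    by split; exists N.
  move=> [m n] [/= hm hn]; rewrite -ball_normE /= rnormE ee ltcR.
  case: (leqP m n) => hmn.
    by rewrite rnorm_distC; apply: (le_lt_trans (hN _ _ hm hmn)); lra.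
  by apply: (le_lt_trans (hN _ _ hn (ltnW hmn))); lra.
exists (lim (u @ \oo)) => e e0.
move/cvgrPdist_le: cu => /(_ e%:C); rewrite ltcR => /(_ e0) [N _ hN].
by exists N => n hn; rewrite rnorm_distC -lecR -rnormE; apply: hN.
Qed.

Lemma converges_unique (u : nat -> V) l l' : converges u l -> converges u l' -> l = l'.
Proof.
move=> c c'; apply/eqP; rewrite -subr_eq0; apply/eqP/rnorm_le0.
apply/ler_addgt0Pr => e e0; rewrite add0r.
have [N hN] := c (e / 2) (ltac:(lra)); have [N' hN'] := c' (e / 2) (ltac:(lra)).
have := hN (maxn N N') (leq_maxl _ _); have := hN' (maxn N N') (leq_maxr _ _).
set m := maxn N N'; have -> : l - l' = (u m - l') - (u m - l).
  by rewrite opprB [in RHS]addrC addrA subrK.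
by move=> h h'; apply: le_trans (rnormD _ _) _; rewrite rnormN; lra.
Qed.

Lemma geometric_converges (u : nat -> V) (C q : R) : 0 <= q < 1 ->
  (forall n, rnorm (u n.+1 - u n) <= C * q ^+ n) -> exists l, converges u l.
Proof.
move=> /andP[q0 q1] hu; have q1' : 0 < 1 - q by lra.
have C0 : 0 <= C by have := hu 0%N; rewrite expr0 mulr1; apply: le_trans (rnorm_ge0 _).
have tail n k : rnorm (u (n + k)%N - u n) <= C * q ^+ n * (1 - q ^+ k) / (1 - q).
  elim: k => [|k ih]; first by rewrite addn0 subrr rnorm0 expr0 subrr mulr0 mul0r.
  have -> : u (n + k.+1)%N - u n = (u (n + k).+1 - u (n + k)%N) + (u (n + k)%N - u n).
    by rewrite addnS addrA subrK.
  apply: le_trans (rnormD _ _) _; apply: le_trans (lerD (hu _) ih) _.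
  by rewrite le_eqVlt; apply/orP; left; apply/eqP; rewrite !exprS exprD; field; rewrite gt_eqF.
apply: cauchy_converges => e e0.
have [N hN] := exprn_eventually_le (ltac:(apply/andP; split; lra) : 0 <= q < 1)
  (ltac:(apply: divr_gt0; [exact: mulr_gt0 | lra]) : 0 < e * (1 - q) / (C + 1)).
exists N => m n hn hnm; rewrite -(subnKC hnm); apply: le_trans (tail _ _) _.
rewrite ler_pdivrMr // -mulrA.
have := hN n hn; have := exprn_ge0 n q0; have := exprn_ge0 (m - n) q0.
move: (q ^+ n) (q ^+ (m - n)) => p r p0 r0 hp.
have : C * p <= e * (1 - q) by rewrite ler_pdivlMr ?ltr_wpDl // in hp; nra.
have : 0 <= C * p * r by rewrite !mulr_ge0.
by rewrite mulrBr mulr1 mulrA; lra.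
Qed.

(* The library's [banach_fixed_point] only covers normed spaces over a [realType]. *)
Lemma contraction_fixpoint (K : set V) (f : V -> V) (q : R) (x0 : V) :
  closed K -> K x0 -> (forall x, K x -> K (f x)) -> 0 <= q < 1 ->
  (forall x y, K x -> K y -> rnorm (f x - f y) <= q * rnorm (x - y)) ->
  exists2 l, K l & f l = l.
Proof.
move=> cK Kx0 fK /andP[q0 q1] lip; pose u n := iter n f x0.
have Ku n : K (u n) by elim: n => //= n; apply: fK.
have hu n : rnorm (u n.+1 - u n) <= rnorm (u 1%N - u 0%N) * q ^+ n.
  elim: n => [|n ih]; first by rewrite expr0 mulr1.
  have -> : u n.+2 - u n.+1 = f (u n.+1) - f (u n) by [].
  apply: le_trans (lip _ _ (Ku _) (Ku _)) _.
  by rewrite exprS mulrCA ler_wpM2l.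
have [l cl] := geometric_converges (ltac:(apply/andP; split => //) : 0 <= q < 1) hu.
have Kl : K l.
  apply: cK; apply/closure_rnormP => e /cl [N hN].
  by exists (u N); split => //; rewrite rnorm_distC; apply: hN.
exists l => //; apply: (converges_unique (u := u \o S)).
  move=> e e0; have [N hN] := cl e e0; exists N => n hn.
  have -> : (u \o S) n - f l = f (u n) - f l by [].
  apply: le_trans (lip _ _ (Ku _) Kl) _; apply: le_trans (ler_wpM2l q0 (hN n hn)) _.
  by rewrite ler_piMl // ltW.
by move=> e /cl [N hN]; exists N => n hn; apply: hN; apply: leqW.
Qed.

End FixedPoint.

Section Subspace.
Variable R : realType.
Variable V : completeNormedModType R[i].
Variable K : set V.
Hypothesis hK : closed_subspace K.

Definition invariant (f : V -> V) := forall v, K v -> K (f v).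

Lemma subspace_closed : closed K. Proof. by case: hK. Qed.
Lemma subspace0 : K 0. Proof. by case: hK. Qed.
Lemma subspace_lin a x y : K x -> K y -> K (a *: x + y).
Proof. by case: hK => _ _; apply. Qed.
Lemma subspaceD x y : K x -> K y -> K (x + y).
Proof. by move=> kx ky; have := subspace_lin 1 kx ky; rewrite scale1r. Qed.
Lemma subspaceZ a x : K x -> K (a *: x).
Proof. by move=> kx; have := subspace_lin a kx subspace0; rewrite addr0. Qed.
Lemma subspaceN x : K x -> K (- x).
Proof. by move=> kx; rewrite -scaleN1r; apply: subspaceZ. Qed.
End Subspace.

Section LaplaceSum.
Variable R : realType.
Variable V : completeNormedModType R[i].
Variable S : R -> V -> V.
Hypothesis hS : contractive_semigroup S.

(* A Riemann sum for the Laplace transform [int_0^oo e^(-mu t) S t y dt], which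
   is [(mu - A)^-1 y]; [e^(-mu k h)] is discretised as [(1 + h mu)^-(k+1)]. *)
Definition laplace_sum (mu h : R) (N : nat) (y : V) :=
  \sum_(k < N) (((1 + h * mu)^-1) ^+ k.+1 * h)%:C *: S (k%:R * h) y.

Lemma laplace_sum_invariant (K : set V) mu h N y : closed_subspace K -> 0 <= h ->
  (forall t, 0 <= t -> invariant K (S t)) -> K y -> K (laplace_sum mu h N y).
Proof.
move=> hK h0 KS Ky; rewrite /laplace_sum; elim/big_ind: _ => [|u v|k _]; first exact: subspace0.
  exact: subspaceD.
by apply: (subspaceZ hK); apply: KS => //; rewrite mulr_ge0.
Qed.

Variables (mu h : R) (y x : V).
Hypotheses (mu0 : 0 < mu) (h0 : 0 < h).

Let a := (1 + h * mu)^-1.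
Let e := diffq S h x - (mu%:C *: x - y).

Lemma euler_weight_gt0 : 0 < a.
Proof. by rewrite /a invr_gt0 addr_gt0 // mulr_gt0. Qed.

Lemma euler_weight_lt1 : a < 1.
Proof. by rewrite /a invf_lt1 ?addr_gt0 ?mulr_gt0 // ltrDl mulr_gt0. Qed.

Lemma euler_stepE : x = a%:C *: (S h x + h%:C *: (y - e)).
Proof.
have -> : y - e = mu%:C *: x - diffq S h x by rewrite /e opprB addrA [y + _]addrC subrK.
rewrite (sgp_diffq S x h0) scalerBr -addrA [_ *: diffq _ _ _ + _]addrC subrK.
rewrite scalerA -rmorphM.
have -> : x + (h * mu)%:C *: x = (1 + h * mu)%:C *: x.
  by rewrite rmorphD rmorph1 scalerDl scale1r.
by rewrite scalerA -rmorphM /a mulVf ?rmorph1 ?scale1r // lt0r_neq0 // addr_gt0 // mulr_gt0.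
Qed.

Lemma laplace_sum_iterE N :
  x = (a ^+ N)%:C *: S (N%:R * h) x + laplace_sum mu h N (y - e).
Proof.
elim: N => [|N ih].
  by rewrite /laplace_sum big_ord0 expr0 mul0r sgp_at0 // rmorph1 scale1r addr0.
rewrite /laplace_sum big_ord_recr /= {1}ih -/(laplace_sum _ _ _ _).
have hN : 0 <= N%:R * h by rewrite mulr_ge0 // ltW.
have -> : S (N%:R * h) x = a%:C *: (S (N.+1%:R * h) x + h%:C *: S (N%:R * h) (y - e)).
  rewrite {1}euler_stepE (linear_mapZ (sgp_linear hS hN)).
  rewrite (linear_mapD (sgp_linear hS hN)) (linear_mapZ (sgp_linear hS hN)).
  by rewrite -(sgp_add hS _ hN (ltW h0)) -natr1 mulrDl mul1r.
rewrite !scalerDr !scalerA -!rmorphM -!exprSr -addrA; congr (_ + _).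
by rewrite addrC.
Qed.

Lemma laplace_sum_err N : rnorm (x - laplace_sum mu h N y) <=
  a ^+ N * rnorm x + (1 - a ^+ N) / mu * rnorm e.
Proof.
have hk k : 0 <= k%:R * h by rewrite mulr_ge0 // ltW.
have -> : x - laplace_sum mu h N y =
    (a ^+ N)%:C *: S (N%:R * h) x - laplace_sum mu h N e.
  rewrite {1}(laplace_sum_iterE N) -addrA; congr (_ + _).
  rewrite /laplace_sum -sumrN -big_split /= -sumrN; apply: eq_bigr => k _.
  by rewrite (linear_mapB (sgp_linear hS (hk k))) scalerBr addrAC subrr add0r.
have a0 := ltW euler_weight_gt0.
apply: le_trans (rnormD _ _) _; rewrite rnormN; apply: lerD.
  by rewrite rnormZ_ge0 ?exprn_ge0 // ler_wpM2l ?exprn_ge0 ?sgp_contr.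
rewrite /laplace_sum; apply: le_trans (@rnorm_sum_le R V N (fun k => a ^+ k.+1 * h)
  (fun k => S (k%:R * h) e) (fun=> rnorm e) _ _) _.
- by move=> k; rewrite mulr_ge0 ?exprn_ge0 // ltW.
- by move=> k /=; apply: sgp_contr.
rewrite -mulr_suml ler_wpM2r ?rnorm_ge0 //.
have ah : a * (h * mu) = 1 - a by rewrite /a; field; rewrite lt0r_neq0 // addr_gt0 // mulr_gt0.
rewrite -(sum_geometric_weights N ah) mulr_suml.
rewrite le_eqVlt; apply/orP; left; apply/eqP/eq_bigr => k _.
by rewrite mulrA mulfK // gt_eqF.
Qed.

End LaplaceSum.

Section ResolventApprox.
Variable R : realType.
Variable V : completeNormedModType R[i].
Variable S : R -> V -> V.
Hypothesis hS : contractive_semigroup S.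

Lemma laplace_sum_approx mu y x : 0 < mu -> resolvent S mu y x ->
  forall eps : R, 0 < eps -> exists2 h : R, 0 < h &
    exists N0, forall N, (N0 <= N)%N -> rnorm (x - laplace_sum S mu h N y) <= eps.
Proof.
move=> mu0 r eps eps0.
have eps_mu : 0 < eps * mu / 2 by rewrite divr_gt0 ?mulr_gt0.
have [d d0 hd] := (generator_graphP S x _).1 r _ eps_mu.
have h0 : 0 < d / 2 by lra.
exists (d / 2) => //; set a := (1 + d / 2 * mu)^-1.
have a01 : 0 <= a < 1.
  by rewrite ltW ?euler_weight_gt0 ?euler_weight_lt1.
have eps_x : 0 < eps / (2 * (rnorm x + 1)).
  by rewrite divr_gt0 ?mulr_gt0 ?ltr_wpDl ?rnorm_ge0.
have [N0 hN0] := exprn_eventually_le a01 eps_x.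
exists N0 => N hN; apply: le_trans (laplace_sum_err hS y x mu0 h0 N) _.
have := hd (d / 2) h0 (ltac:(lra)); rewrite -/a.
set E := rnorm _ => hE; have E0 : 0 <= E := rnorm_ge0 _.
have := hN0 N hN; have := exprn_ge0 N (ltW (euler_weight_gt0 mu0 h0)).
have := exprn_ile1 N (ltW (euler_weight_gt0 mu0 h0)) (ltW (euler_weight_lt1 mu0 h0)).
rewrite -/a; move: (a ^+ N) => p p1 p0 hp.
have hpx : p * rnorm x <= eps / 2.
  move: hp; rewrite ler_pdivlMr ?mulr_gt0 ?ltr_wpDl ?rnorm_ge0 //.
  by have := rnorm_ge0 x; nra.
have hEmu : (1 - p) / mu * E <= eps / 2.
  rewrite mulrAC ler_pdivrMr //.
  have : (1 - p) * E <= E by rewrite ler_piMl // gerBl.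
  by move: hE; lra.
lra.
Qed.

Lemma resolvent_invariant (K : set V) mu y x : closed_subspace K ->
  (forall t, 0 <= t -> invariant K (S t)) -> 0 < mu -> K y -> resolvent S mu y x -> K x.
Proof.
move=> hK KS mu0 Ky r; apply: (subspace_closed hK); apply/closure_rnormP => eps eps0.
have [h h0 [N hN]] := laplace_sum_approx mu0 r eps0.
exists (laplace_sum S mu h N y); split; last exact: hN.
exact: laplace_sum_invariant (ltW h0) KS Ky.
Qed.

Lemma sgp_dist_le w (e tau : R) : 0 < tau ->
  (forall r, 0 <= r -> r < tau -> rnorm (S r w - w) <= e) ->
  forall r, 0 <= r -> rnorm (S r w - w) <= e + 2 * rnorm w * r / tau.
Proof.
move=> tau0 htau r r0.
have e0 : 0 <= e by have := htau 0 (lexx 0) tau0; rewrite sgp_at0 // subrr rnorm0.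
have W0 := rnorm_ge0 w.
case: (ltP r tau) => hr.
  by apply: le_trans (htau r r0 hr) _; rewrite lerDl divr_ge0 ?mulr_ge0 // ltW.
apply: le_trans (rnormD _ _) _; rewrite rnormN.
have : 2 * rnorm w <= 2 * rnorm w * r / tau.
  by rewrite ler_pdivlMr // ler_wpM2l ?mulr_ge0.
by have := sgp_contr hS w r0; lra.
Qed.

Lemma laplace_sum_scaled_dist w (lam h e tau : R) N : 0 < lam -> 0 < h -> 0 < tau ->
  (forall r, 0 <= r -> r < tau -> rnorm (S r w - w) <= e) ->
  rnorm (laplace_sum S lam h N (lam%:C *: w) - w) <=
    e + 2 * rnorm w / (tau * lam) + ((1 + h * lam)^-1) ^+ N * rnorm w.
Proof.
move=> lam0 h0 tau0 htau; set a := (1 + h * lam)^-1.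
have a0 : 0 < a := euler_weight_gt0 lam0 h0.
have a1 : a < 1 := euler_weight_lt1 lam0 h0.
have ah : a * (h * lam) = 1 - a by rewrite /a; field; rewrite lt0r_neq0 // addr_gt0 // mulr_gt0.
have hk k : 0 <= k%:R * h by rewrite mulr_ge0 // ltW.
have e0 : 0 <= e by have := htau 0 (lexx 0) tau0; rewrite sgp_at0 // subrr rnorm0.
pose c k := a ^+ k * (1 - a).
have csum : \sum_(k < N) c k = 1 - a ^+ N.
  by rewrite -(sum_geometric_weights N ah); apply: eq_bigr => k _; rewrite /c -ah exprS; ring.
have -> : laplace_sum S lam h N (lam%:C *: w) - w =
    \sum_(k < N) (c k)%:C *: (S (k%:R * h) w - w) - (a ^+ N)%:C *: w.
  have -> : \sum_(k < N) (c k)%:C *: (S (k%:R * h) w - w) =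
      laplace_sum S lam h N (lam%:C *: w) - (1 - a ^+ N)%:C *: w.
    rewrite -csum rmorph_sum scaler_suml -sumrB /laplace_sum; apply: eq_bigr => k _.
    rewrite (linear_mapZ (sgp_linear hS (hk k))) scalerA -rmorphM scalerBr.
    by rewrite /c -ah exprS -/a; congr (_%:C *: _ - _); ring.
  by rewrite rmorphB rmorph1 scalerBl scale1r opprB [_ *: w - w]addrC addrA addrK.
apply: le_trans (rnormD _ _) _.
rewrite rnormN rnormZ_ge0; last exact: exprn_ge0 (ltW a0).
apply: lerD => //; apply: le_trans (@rnorm_sum_le R V N c (fun k => S (k%:R * h) w - w)
  (fun k => e + 2 * rnorm w * (k%:R * h) / tau) _ _) _.
- by move=> k; rewrite /c mulr_ge0 ?exprn_ge0 ?subr_ge0 ?ltW.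
- by move=> k; apply: sgp_dist_le.
have -> : \sum_(k < N) c k * (e + 2 * rnorm w * (k%:R * h) / tau) =
    e * (1 - a ^+ N) + 2 * rnorm w * h / tau * \sum_(k < N) k%:R * a ^+ k * (1 - a).
  rewrite -csum mulr_sumr mulr_sumr -big_split; apply: eq_bigr => k _ /=.
  by rewrite /c; field; rewrite gt_eqF.
have hidx := sum_index_geometric_le N (ltac:(rewrite ltW ?a1 //) : 0 <= a < 1).
have -> : 2 * rnorm w / (tau * lam) = 2 * rnorm w * h / tau * (a / (1 - a)).
  by rewrite -ah; field; rewrite !gt_eqF.
apply: lerD; first by apply: ler_piMr => //; rewrite gerBl exprn_ge0 // ltW.
by rewrite ler_wpM2l // divr_ge0 ?mulr_ge0 ?rnorm_ge0 // ltW.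
Qed.

Lemma resolvent_scaled_approx w (eps : R) : 0 < eps -> exists2 L : R, 0 < L &
  forall lam x, L <= lam -> resolvent S lam (lam%:C *: w) x -> rnorm (x - w) <= eps.
Proof.
move=> eps0; have [tau tau0 htau] := sgp_cont0 hS w (ltac:(lra) : 0 < eps / 3).
have W0 := rnorm_ge0 w.
have L0 : 0 < 6 * (rnorm w + 1) / (tau * eps) by rewrite divr_gt0 ?mulr_gt0 //; lra.
exists (6 * (rnorm w + 1) / (tau * eps)) => // lam x hL r.
have lam0 : 0 < lam by apply: lt_le_trans hL.
have hW : 2 * rnorm w / (tau * lam) <= eps / 3.
  by move: hL; rewrite !ler_pdivrMr ?mulr_gt0 //; nra.
have [h h0 [N0 hN0]] := laplace_sum_approx lam0 r (ltac:(lra) : 0 < eps / 6).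
have a0 := euler_weight_gt0 lam0 h0; have a1 := euler_weight_lt1 lam0 h0.
have a01 : 0 <= (1 + h * lam)^-1 < 1 by rewrite (ltW a0) a1.
have [N1 hN1] := exprn_eventually_le a01 (ltac:(rewrite divr_gt0 //; lra) :
  0 < eps / (6 * (rnorm w + 1))).
have hN1' := hN1 (maxn N0 N1) (leq_maxr _ _).
have hpW : ((1 + h * lam)^-1) ^+ maxn N0 N1 * rnorm w <= eps / 6.
  move: hN1'; rewrite ler_pdivlMr; last lra.
  by have := exprn_ge0 (maxn N0 N1) (ltW a0); nra.
have := laplace_sum_scaled_dist (maxn N0 N1) lam0 h0 tau0 htau.
have := hN0 (maxn N0 N1) (leq_maxl _ _).
set Y := laplace_sum _ _ _ _ _; have -> : x - w = (x - Y) + (Y - w) by rewrite addrA subrK.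
by move=> d1 d2; apply: le_trans (rnormD _ _) _; lra.
Qed.

End ResolventApprox.

Section ExponentialFormula.
Variable R : realType.
Variable V : completeNormedModType R[i].
Variable S : R -> V -> V.
Hypothesis hS : contractive_semigroup S.

Local Notation gen := (generator_graph S).

Definition resolvent_stable (K : set V) (mu : R) :=
  forall y, K y -> exists x, K x /\ resolvent S mu y x.

(* One backward Euler step [(1 - s A)^-1 v] approximates [S s v] to second
   order when [v] lies in the domain of [A^2]. *)
Lemma backward_euler_err (s : R) (v av b x1 : V) : 0 < s -> gen v av -> gen av b ->
  resolvent S s^-1 (s^-1%:C *: v) x1 ->
  rnorm (x1 - S s v) <= s ^+ 2 * rnorm b + s * rnorm (diffq S s v - av).
Proof.
move=> s0 g1 g2 r; have mu0 : 0 < s^-1 by rewrite invr_gt0.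
have r1 : resolvent S s^-1 av (x1 - v).
  by have := generator_graphB hS r g1; rewrite /resolvent; congr gen; rewrite scalerBr.
have r2 : resolvent S s^-1 (av - s%:C *: b) (s%:C *: av).
  have := generator_graphZ hS (a := s%:C) g2; rewrite /resolvent; congr gen.
  by rewrite scalerA -rmorphM mulVf ?gt_eqF // rmorph1 scale1r opprB addrC subrK.
have r3 := resolventB hS r1 r2; rewrite opprB addrC subrK in r3.
have hb : rnorm (x1 - v - s%:C *: av) <= s ^+ 2 * rnorm b.
  have := resolvent_bound hS mu0 r3; rewrite rnormZ_ge0 ?(ltW s0) // => h.
  have := ler_wpM2l (ltW s0) h; rewrite mulrA mulfV ?gt_eqF // mul1r.
  by rewrite mulrA -expr2.
have -> : x1 - S s v = (x1 - v - s%:C *: av) - s%:C *: (diffq S s v - av).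
  by rewrite (sgp_diffq S v s0) scalerBr opprB [in RHS]addrA subrK opprD addrA.
apply: le_trans (rnormD _ _) _; rewrite rnormN rnormZ_ge0 ?(ltW s0) //.
exact: lerD.
Qed.

Lemma backward_euler_iter_err (K : set V) (s err : R) (v x1 : V) :
  closed_subspace K -> 0 < s -> resolvent_stable K s^-1 -> K v ->
  resolvent S s^-1 (s^-1%:C *: v) x1 -> rnorm (x1 - S s v) <= err ->
  forall k : nat, exists q, K q /\ rnorm (q - S (k%:R * s) v) <= k%:R * err.
Proof.
move=> hK s0 hres Kv r1 herr; elim => [|k [q [Kq hq]]].
  by exists v; rewrite mul0r sgp_at0 // subrr rnorm0 mul0r.
have mu0 : 0 < s^-1 by rewrite invr_gt0.
have ks : 0 <= k%:R * s by rewrite mulr_ge0 // ltW.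
have [q' [Kq' rq']] := hres _ (subspaceZ hK s^-1%:C Kq).
exists q'; split => //.
have rS := resolvent_sgp hS ks r1; rewrite (linear_mapZ (sgp_linear hS ks)) in rS.
have := resolvent_bound hS mu0 (resolventB hS rq' rS); rewrite -scalerBr.
rewrite rnormZ_ge0 ?(ltW mu0) // ler_pM2l // => b3.
have -> : S (k.+1%:R * s) v = S (k%:R * s) (S s v).
  by rewrite -(sgp_add hS _ ks (ltW s0)) -natr1 mulrDl mul1r.
have -> : q' - S (k%:R * s) (S s v) = (q' - S (k%:R * s) x1) + S (k%:R * s) (x1 - S s v).
  by rewrite (linear_mapB (sgp_linear hS ks)) addrA subrK.
apply: le_trans (rnormD _ _) _; rewrite -natr1 mulrDl mul1r.
apply: lerD; first exact: le_trans b3 hq.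
exact: le_trans (sgp_contr hS _ ks) herr.
Qed.

(* [v' = (L (L - A)^-1)^2 v] lies in the domain of [A^2] and tends to [v] as
   [L] grows. *)
Lemma regular_approx (K : set V) v : closed_subspace K ->
  (forall mu, 0 < mu -> resolvent_stable K mu) -> K v ->
  forall eps : R, 0 < eps -> exists v' av b,
    [/\ K v', gen v' av, gen av b & rnorm (v - v') <= eps].
Proof.
move=> hK hres Kv eps eps0.
have [L L0 hL] := resolvent_scaled_approx hS v (ltac:(lra) : 0 < eps / 2).
have [p [Kp rp]] := hres L L0 _ (subspaceZ hK L%:C Kv).
have [v' [Kv' rv']] := hres L L0 _ (subspaceZ hK L%:C Kp).
have hp : rnorm (p - v) <= eps / 2 := hL L p (lexx _) rp.
have hv' : rnorm (v' - p) <= rnorm (p - v).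
  have := resolvent_bound hS L0 (resolventB hS rv' rp).
  by rewrite -scalerBr rnormZ_ge0 ?(ltW L0) // ler_pM2l.
have g2 := generator_graphB hS (generator_graphZ hS (a := L%:C) rv')
  (generator_graphZ hS (a := L%:C) rp).
exists v'; do 2!eexists; split; [done | exact: rv' | exact: g2 |].
have -> : v - v' = - ((v' - p) + (p - v)) by rewrite addrA subrK opprB.
by rewrite rnormN; apply: le_trans (rnormD _ _) _; lra.
Qed.

(* [N] backward Euler steps of size [s = t / N] from [v] reach [S t v] up to
   [N (s^2 |A^2 v| + s |diffq s v - A v|)], which is small for [N] large. *)
Lemma regular_orbit_approx (K : set V) v av b t : closed_subspace K ->
  (forall mu, 0 < mu -> resolvent_stable K mu) -> K v -> gen v av -> gen av b -> 0 < t ->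
  forall eps : R, 0 < eps -> exists q, K q /\ rnorm (S t v - q) <= eps.
Proof.
move=> hK hres Kv g1 g2 t0 eps eps0.
have B0 := rnorm_ge0 b.
have [d d0 hd] := (generator_graphP S v av).1 g1 (eps / (2 * t))
  (ltac:(rewrite divr_gt0 //; lra)).
pose m := Num.min (d / 2) (eps / (2 * t * (rnorm b + 1))).
have m0 : 0 < m by rewrite lt_min divr_gt0 //= divr_gt0 // !mulr_gt0 //; lra.
have [N0 _ hN0] := nbhs_infty_ger (t / m).
have hN : t / m <= N0.+1%:R by apply: le_trans (hN0 N0 (leqnn _)) _; rewrite ler_nat.
pose s := t / N0.+1%:R.
have s0 : 0 < s by rewrite divr_gt0.
have sm : s <= m by rewrite /s ler_pdivrMr // mulrC -ler_pdivrMr.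
have hs_d : s < d by apply: le_lt_trans sm _; rewrite gt_min; apply/orP; left; lra.
have hsB : t * s * rnorm b <= eps / 2.
  have : s <= eps / (2 * t * (rnorm b + 1)) by apply: le_trans sm _; rewrite ge_min lexx orbT.
  by rewrite ler_pdivlMr ?mulr_gt0 ?ltr_wpDl //; nra.
have hres_s : resolvent_stable K s^-1 by apply: hres; rewrite invr_gt0.
have [x1 [Kx1 rx1]] := hres_s _ (subspaceZ hK s^-1%:C Kv).
have [q [Kq hq]] := backward_euler_iter_err hK s0 hres_s Kv rx1
  (backward_euler_err s0 g1 g2 rx1) N0.+1.
exists q; split => //; rewrite rnorm_distC.
have Ns : N0.+1%:R * s = t by rewrite /s mulrC mulfVK // gt_eqF.
rewrite Ns in hq.
apply: le_trans hq _; have := hd s s0 hs_d.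
set E := rnorm _ => hE.
have -> : N0.+1%:R * (s ^+ 2 * rnorm b + s * E) = t * s * rnorm b + t * E.
  by rewrite /s; field; rewrite gt_eqF.
have : t * E <= eps / 2 by move: hE; rewrite ler_pdivlMr ?mulr_gt0 //; lra.
lra.
Qed.

Lemma sgp_invariant_of_resolvent (K : set V) : closed_subspace K ->
  (forall mu, 0 < mu -> resolvent_stable K mu) -> forall t, 0 <= t -> invariant K (S t).
Proof.
move=> hK hres t; rewrite le_eqVlt => /orP[/eqP <- v Kv|t0 v Kv].
  by rewrite sgp_at0.
apply: (subspace_closed hK); apply/closure_rnormP => eps eps0.
have [v' [av [b [Kv' g1 g2 hv]]]] := regular_approx hK hres Kv (ltac:(lra) : 0 < eps / 2).
have [q [Kq hq]] := regular_orbit_approx hK hres Kv' g1 g2 t0 (ltac:(lra) : 0 < eps / 2).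
exists q; split => //.
have -> : S t v - q = S t (v - v') + (S t v' - q).
  by rewrite (linear_mapB (sgp_linear hS (ltW t0))) addrA subrK.
apply: le_trans (rnormD _ _) _.
by have := sgp_contr hS (v - v') (ltW t0); lra.
Qed.

End ExponentialFormula.

Section ResolventPerturbation.
Variable R : realType.
Variable V : completeNormedModType R[i].
Variable S : R -> V -> V.
Hypothesis hS : contractive_semigroup S.
Variable K : set V.
Hypothesis hK : closed_subspace K.

(* [(mu - A)^-1 y] is the fixed point of [w |-> (mu0 - A)^-1 (y + (mu0 - mu) w)],
   a contraction of ratio [|mu0 - mu| / mu0 < 1]. *)
Lemma resolvent_stable_near mu0 mu : 0 < mu0 -> resolvent_stable S K mu0 ->
  0 < mu -> mu < 2 * mu0 -> resolvent_stable S K mu.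
Proof.
move=> mu00 hres0 mu_0 mu2 y Ky.
have [R0 hR0] : exists R0 : V -> V, forall w, K w -> K (R0 w) /\ resolvent S mu0 w (R0 w).
  have /choice [f hf] : forall w, exists x, K w -> K x /\ resolvent S mu0 w x.
    move=> w; case: (pselect (K w)) => [/hres0 [x hx]|nKw]; first by exists x.
    by exists 0.
  by exists f.
set c := mu0 - mu.
have Kc w : K w -> K (y + c%:C *: w).
  by move=> Kw; apply: (subspaceD hK) => //; apply: (subspaceZ hK).
have q01 : 0 <= `|c| / mu0 < 1.
  apply/andP; split; first by rewrite divr_ge0 // ltW.
  by rewrite ltr_pdivrMr // mul1r ltr_norml /c; apply/andP; split; lra.
pose f w := R0 (y + c%:C *: w).
have lip w1 w2 : K w1 -> K w2 -> rnorm (f w1 - f w2) <= `|c| / mu0 * rnorm (w1 - w2).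
  move=> Kw1 Kw2; have r := resolventB hS (hR0 _ (Kc _ Kw1)).2 (hR0 _ (Kc _ Kw2)).2.
  have := resolvent_bound hS mu00 r; rewrite opprD addrACA subrr add0r -scalerBr rnormZ_real.
  by rewrite mulrAC ler_pdivlMr // mulrC.
have [l Kl fl] := contraction_fixpoint (subspace_closed hK) (subspace0 hK)
  (fun w Kw => (hR0 _ (Kc w Kw)).1) q01 lip.
exists l; split => //; have := (hR0 _ (Kc l Kl)).2; rewrite fl /resolvent.
congr generator_graph.
have -> : mu%:C *: l = mu0%:C *: l - c%:C *: l.
  by rewrite /c rmorphB scalerBl opprB addrC subrK.
by rewrite opprD addrA addrAC.
Qed.

Lemma resolvent_stable_all : resolvent_stable S K 1 ->
  forall mu, 0 < mu -> resolvent_stable S K mu.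
Proof.
move=> hres1.
have pow2 k : forall mu, 0 < mu -> mu < 2 ^+ k.+1 -> resolvent_stable S K mu.
  elim: k => [|k ih] mu mu0 hmu.
    by apply: resolvent_stable_near ltr01 hres1 mu0 _; rewrite mulr1 -[2]expr1.
  have mu1 : 0 < (mu / 2 + 2 ^+ k.+1) / 2 by rewrite divr_gt0 ?addr_gt0 ?exprn_gt0 //; lra.
  apply: resolvent_stable_near mu1 (ih _ mu1 _) mu0 _; move: hmu; rewrite exprS; lra.
move=> mu mu0; have [N _ hN] := nbhs_infty_ger mu.
apply: (pow2 N) => //; apply: le_lt_trans (hN N (leqnn N)) _.
by rewrite -natrX ltr_nat ltnW // ltn_expl.
Qed.

End ResolventPerturbation.

Section Cogenerator.
Variable R : realType.
Variable V : completeNormedModType R[i].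
Variable S : R -> V -> V.
Hypothesis hS : contractive_semigroup S.
Variable T : V -> V.
Hypothesis hT : cogenerator S T.

(* [T y = (A + 1) x] where [x = (A - 1)^-1 y], i.e. [x = (1 - A)^-1 (- y)];
   hence [T = 1 - 2 (1 - A)^-1]. *)
Lemma cogeneratorE y : exists x, resolvent S 1 (- y) x /\ T y = y + (x + x).
Proof.
have [x [z [g hzx ->]]] := hT y; exists x; split; last by rewrite -hzx addrA subrK.
by rewrite /resolvent rmorph1 scale1r opprK -hzx addrC subrK.
Qed.

Lemma cogenerator_resolvent y x : resolvent S 1 (- y) x -> T y = y + (x + x).
Proof.
by move=> r; have [x' [r' ->]] := cogeneratorE y; rewrite (resolvent_unique hS ltr01 r' r).
Qed.

Lemma cogenerator_linear : linear_map T.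
Proof.
move=> a y1 y2; have [x1 [r1 ->]] := cogeneratorE y1; have [x2 [r2 ->]] := cogeneratorE y2.
have := resolvent_linear hS (a := a) r1 r2; rewrite scalerN -opprD => /cogenerator_resolvent ->.
by rewrite !scalerDr [a *: x1 + x2 + _]addrACA [a *: y1 + y2 + _]addrACA.
Qed.

Lemma cogenerator_bound y : rnorm (T y) <= 3 * rnorm y.
Proof.
have [x [r ->]] := cogeneratorE y.
have := resolvent_bound hS ltr01 r; rewrite mul1r rnormN => hx.
by apply: le_trans (rnormD _ _) _; have := rnormD x x; lra.
Qed.

Lemma cogenerator_invariant (K : set V) : closed_subspace K ->
  (forall t, 0 <= t -> invariant K (S t)) -> invariant K T.
Proof.
move=> hK KS y Ky; have [x [r ->]] := cogeneratorE y.
have Kx : K x := resolvent_invariant hS hK KS ltr01 (subspaceN hK Ky) r.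
by apply: (subspaceD hK) => //; apply: (subspaceD hK).
Qed.

Lemma sgp_invariant_of_cogenerator (K : set V) : closed_subspace K ->
  invariant K T -> forall t, 0 <= t -> invariant K (S t).
Proof.
move=> hK KT; apply: (sgp_invariant_of_resolvent hS hK); apply: (resolvent_stable_all hS hK).
move=> y Ky; have [x [r hTy]] := cogeneratorE (- y); rewrite opprK in r.
exists x; split => //.
have : K (T (- y) + y) by apply: (subspaceD hK) => //; apply/KT/(subspaceN hK).
rewrite hTy addrC addrA subrr add0r => K2x.
have -> : x = (2%:R : R[i])^-1 *: (x + x).
  have -> : x + x = (2%:R : R[i]) *: x by rewrite scaler_nat mulr2n.
  by rewrite scalerA mulVf ?scale1r // pnatr_eq0.
exact: (subspaceZ hK).
Qed.

End Cogenerator.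

Local Notation span := Defs.span.

Section ClosedSpan.
Variable R : realType.
Variable V : completeNormedModType R[i].

Definition bounded_map (f : V -> V) :=
  exists2 C : R, 0 <= C & forall x, rnorm (f x) <= C * rnorm x.

Lemma sub_span (A : set V) : A `<=` span A.
Proof.
move=> x Ax; exists 1%N, (fun _ => 1), (fun _ => x); split => //.
by rewrite big_ord1 scale1r.
Qed.

Lemma span_lin (A : set V) a x y : span A x -> span A y -> span A (a *: x + y).
Proof.
move=> [m1 [c1 [f1 [hf1 ->]]]] [m2 [c2 [f2 [hf2 ->]]]]; exists (m1 + m2)%N.
exists (fun i => match fintype.split i with inl j => a * c1 j | inr j => c2 j end).
exists (fun i => match fintype.split i with inl j => f1 j | inr j => f2 j end).
split; first by move=> k; case: (fintype.split k).
rewrite big_split_ord /= scaler_sumr; congr (_ + _); apply: eq_bigr => i _.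
  by rewrite (unsplitK (inl i)) scalerA.
by rewrite (unsplitK (inr i)).
Qed.

Lemma sub_closed_span (A : set V) : A `<=` closed_span A.
Proof. by move=> x /sub_span; apply: subset_closure. Qed.

Lemma closed_span_subspace (A : set V) : closed_subspace (closed_span A).
Proof.
split; first exact: closed_closure.
  apply: subset_closure; exists 0%N, (fun _ => 0), (fun _ => 0).
  by split => [[]|]; rewrite ?big_ord0.
move=> a x y /closure_rnormP cx /closure_rnormP cy; apply/closure_rnormP => e e0.
have c0 : 0 < complex.Re `|a| + 1 by have := Re_norm_ge0 a; lra.
have [x' [sx hx]] := cx (e / (2 * (complex.Re `|a| + 1))) (ltac:(rewrite divr_gt0 //; lra)).
have [y' [sy hy]] := cy (e / 2) (ltac:(lra)).
exists (a *: x' + y'); split; first exact: span_lin.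
rewrite opprD addrACA -scalerBr; apply: le_trans (rnormD _ _) _; rewrite rnormZ.
have : complex.Re `|a| * rnorm (x - x') <= e / 2.
  apply: le_trans (ler_wpM2l (Re_norm_ge0 a) hx) _.
  by rewrite mulrA ler_pdivrMr ?mulr_gt0 //; nra.
lra.
Qed.

Lemma closed_span_min (A K : set V) : closed_subspace K -> A `<=` K -> closed_span A `<=` K.
Proof.
move=> hK AK; have sK : span A `<=` K.
  move=> _ [m [c [f [hf ->]]]]; elim/big_ind: _ => [|x y|i _]; first exact: subspace0.
    exact: subspaceD.
  by apply: (subspaceZ hK); apply: AK.
by move=> x /(closureS sK); apply: (subspace_closed hK).
Qed.

Lemma closed_spanS (A B : set V) : A `<=` B -> closed_span A `<=` closed_span B.
Proof.
move=> AB; apply: closed_span_min; first exact: closed_span_subspace.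
by move=> x /AB; apply: sub_closed_span.
Qed.

Lemma preimage_closed_subspace (f : V -> V) (K : set V) :
  linear_map f -> bounded_map f -> closed_subspace K -> closed_subspace (f @^-1` K).
Proof.
move=> lf [C C0 hC] hK; split.
- move=> v /closure_rnormP cv; apply: (subspace_closed hK); apply/closure_rnormP => e e0.
  have [v' [Kv' hv]] := cv (e / (C + 1)) (ltac:(rewrite divr_gt0 //; lra)).
  exists (f v'); split => //; rewrite -(linear_mapB lf); apply: le_trans (hC _) _.
  move: hv; rewrite ler_pdivlMr; last lra.
  by have := rnorm_ge0 (v - v'); nra.
- by rewrite /= (linear_map0 lf); apply: subspace0.
- by move=> a x y /= Kx Ky; rewrite lf; apply: (subspace_lin hK).
Qed.

End ClosedSpan.

Section OperatorFamilies.
Variable R : realType.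
Variable V : completeNormedModType R[i].

Definition invariant_under (P : set (V -> V)) (K : set V) := forall g, P g -> invariant K g.

Definition operator_monoid (P : set (V -> V)) :=
  [/\ P id, (forall g g', P g -> P g' -> P (g \o g'))
    & (forall g, P g -> linear_map g /\ bounded_map g)].

Lemma iter_operator_monoid (f : V -> V) : linear_map f -> bounded_map f ->
  operator_monoid ((fun m => iter m f) @` setT).
Proof.
move=> lf [C C0 hC]; split; first by exists 0%N.
  by move=> _ _ [m _ <-] [m' _ <-]; exists (m + m')%N => //; apply/funext => v; rewrite iterD.
move=> _ [m _ <-]; split.
  by elim: m => [|m ih] a x y //=; rewrite ih lf.
exists (C ^+ m); first exact: exprn_ge0.
elim: m => [|m ih] x /=; first by rewrite expr0 mul1r.
by apply: le_trans (hC _) _; rewrite exprS -mulrA ler_wpM2l.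
Qed.

Lemma sgp_operator_monoid (S : R -> V -> V) : contractive_semigroup S ->
  operator_monoid (S @` [set t | 0 <= t]).
Proof.
move=> hS; split.
- by exists 0; [exact: lexx | apply: funext => v; exact: sgp_at0].
- move=> _ _ [t t0 <-] [t' t0' <-]; exists (t + t'); first exact: addr_ge0.
  by apply/funext => v; rewrite sgp_add.
- move=> _ [t t0 <-]; split; first exact: sgp_linear.
  by exists 1 => // x; rewrite mul1r sgp_contr.
Qed.

Lemma sgp_invariant_iff_cogenerator (S : R -> V -> V) (T : V -> V) (K : set V) :
  contractive_semigroup S -> cogenerator S T -> closed_subspace K ->
  invariant_under (S @` [set t | 0 <= t]) K <->
  invariant_under ((fun m => iter m T) @` setT) K.
Proof.
move=> hS hT hK; split=> [KS _ [m _ <-]|KT _ [t t0 <-]].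
  have KT : invariant K T by apply: (cogenerator_invariant hS hT hK) => t t0; apply: KS.
  by elim: m => [|m ih] v Kv //=; apply/KT/ih.
by apply: (sgp_invariant_of_cogenerator hS hT hK) => // y; apply: (KT (iter 1 T)).
Qed.

Lemma cogenerator_operator_monoid (S : R -> V -> V) (T : V -> V) :
  contractive_semigroup S -> cogenerator S T ->
  operator_monoid ((fun m => iter m T) @` setT).
Proof.
move=> hS hT; apply: iter_operator_monoid => [a x y|]; first exact: (cogenerator_linear hS hT).
by exists 3 => //; apply: (cogenerator_bound hS hT).
Qed.

End OperatorFamilies.

Section NestedOrbit.
Variable R : realType.
Variable V : completeNormedModType R[i].
Variable n : nat.

Fixpoint nested_orbit (P : 'I_n -> set (V -> V)) (H : set V) (l : seq 'I_n) : set V :=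
  if l is j :: l' then [set g w | g in P j & w in nested_orbit P H l'] else H.

Lemma foldr_nested_orbit P H (F : 'I_n -> V -> V) h l : (forall j, P j (F j)) -> H h ->
  nested_orbit P H l (foldr (fun j v => F j v) h l).
Proof.
move=> PF Hh; elim: l => [|j l ih] //=.
by exists (F j) => //; exists (foldr (fun j v => F j v) h l).
Qed.

Lemma nested_orbit_foldr (A : Type) (Op : 'I_n -> A -> V -> V) (D : set A) (a0 : A) H l v :
  D a0 -> uniq l -> nested_orbit (fun j => Op j @` D) H l v ->
  exists h (p : 'I_n -> A), [/\ H h, forall j, D (p j) &
     v = foldr (fun j v => Op j (p j) v) h l].
Proof.
move=> Da0; elim: l v => [|j l ih] v /=; first by move=> _ Hv; exists v, (fun _ => a0).
move=> /andP[jl ul] [_ [a Da <-] [w ow <-]].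
have [h [p [Hh Dp ->]]] := ih w ul ow.
exists h, (fun i => if i == j then a else p i); split => //.
  by move=> i; case: (i == j).
rewrite eqxx; congr (Op j a _); elim: l jl {ul ow ih} => //= i l ih.
rewrite in_cons negb_or => /andP[ij jl]; rewrite ih //.
by rewrite eq_sym (negbTE ij).
Qed.

Lemma nested_orbit_transfer (P1 P2 : 'I_n -> set (V -> V)) H :
  (forall j, operator_monoid (P2 j)) ->
  (forall j K, closed_subspace K -> invariant_under (P2 j) K -> invariant_under (P1 j) K) ->
  forall l, nested_orbit P1 H l `<=` closed_span (nested_orbit P2 H l).
Proof.
move=> mon htr; elim => [|j l ih] /=; first exact: sub_closed_span.
move=> _ [g1 P1g [w ow <-]].
have [id2 comp2 lin2] := mon j.
set K := closed_span _; have hK : closed_subspace K := closed_span_subspace _.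
apply: (htr j K hK) => // [g P2g v Kv|].
  have [lg bg] := lin2 g P2g.
  apply: (closed_span_min (preimage_closed_subspace lg bg hK) _ Kv).
  move=> _ [g' P2g' [w' ow' <-]]; apply: sub_closed_span.
  by exists (g \o g'); [exact: comp2 | exists w'].
apply: closed_spanS (ih _ ow) => x ox.
by exists id => //; exists x.
Qed.

Lemma closed_span_nested_orbit_eq (P1 P2 : 'I_n -> set (V -> V)) H l :
  (forall j, operator_monoid (P1 j)) -> (forall j, operator_monoid (P2 j)) ->
  (forall j K, closed_subspace K -> invariant_under (P1 j) K <-> invariant_under (P2 j) K) ->
  closed_span (nested_orbit P1 H l) = closed_span (nested_orbit P2 H l).
Proof.
move=> mon1 mon2 hiff; apply/seteqP; split; apply: closed_span_min;
  do ?exact: closed_span_subspace; apply: nested_orbit_transfer => // j K hK.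
  exact: (hiff j K hK).2.
exact: (hiff j K hK).1.
Qed.

End NestedOrbit.

Lemma semigroup_orbitE (R : realType) (V : completeNormedModType R[i]) n
    (S : 'I_n -> R -> V -> V) (H : set V) :
  semigroup_orbit S H = nested_orbit (fun j => S j @` [set t | 0 <= t]) H (enum 'I_n).
Proof.
apply/seteqP; split=> [_ [h [t [Hh t0 ->]]]|v].
  by rewrite /compose_all; apply: foldr_nested_orbit _ Hh => j; exists (t j); first exact: t0.
move=> /(nested_orbit_foldr (Op := S) (lexx (0 : R)) (enum_uniq _)).
by move=> [h [t [Hh t0 ->]]]; exists h, t.
Qed.

Lemma cogenerator_orbitE (R : realType) (V : completeNormedModType R[i]) n
    (T : 'I_n -> V -> V) (H : set V) :
  cogenerator_orbit T H =
  nested_orbit (fun j => (fun m => iter m (T j)) @` setT) H (enum 'I_n).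
Proof.
apply/seteqP; split=> [_ [h [m [Hh ->]]]|v].
  by rewrite /compose_all; apply: foldr_nested_orbit _ Hh => j; exists (m j).
move=> /(nested_orbit_foldr (Op := fun j m => iter m (T j)) (I : setT 0%N) (enum_uniq _)).
by move=> [h [m [Hh _ ->]]]; exists h, m.
Qed.

Theorem mainTheorem13 (R : realType) (V : completeNormedModType R[i])
  (ip : V -> V -> R[i]) (hip : is_inner_product_of_norm ip)
  (n : nat) (S : 'I_n -> R -> V -> V) (T : 'I_n -> V -> V)
  (hS : forall j, contractive_semigroup (S j))
  (hT : forall j, cogenerator (S j) (T j))
  (hcomm : commuting_semigroups S)
  (H : set V) (hH : closed_subspace H) :
  closed_span (semigroup_orbit S H) = setT <->
  closed_span (cogenerator_orbit T H) = setT.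
Proof.
suff -> : closed_span (semigroup_orbit S H) = closed_span (cogenerator_orbit T H) by [].
rewrite semigroup_orbitE cogenerator_orbitE; apply: closed_span_nested_orbit_eq => j.
- exact: sgp_operator_monoid.
- exact: cogenerator_operator_monoid.
- by move=> K hK; apply: sgp_invariant_iff_cogenerator.
Qed.
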